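(* Let $\alpha\in\{1,2,3\}$, let $T_0\in\mathcal{T}(\mathbb{R}^2)$ with $T_0\subset\Sigma^\alpha$ have vertices $i_0\in\mathcal{L}^1$, $j_0\in\mathcal{L}^2$, $k_0\in\mathcal{L}^3$, let $u\colon\mathcal{L}\to\mathcal{S}^1$, and let $\theta(i_0)\in\mathbb{R}$, $\theta(j_0)\in[\theta(i_0)-\pi,\theta(i_0)+\pi)$, $\theta(k_0)\in[\theta(j_0)-\pi,\theta(j_0)+\pi)$ satisfy $u(p_0)=e^{\iota\theta(p_0)}$ for $p\in\{i,j,k\}$ and $$\Big|\theta(j_0)-\theta(i_0)-\tfrac{2\pi}{3}\Big|\le\tfrac14,\qquad\Big|\theta(k_0)-\theta(j_0)-\tfrac{2\pi}{3}\Big|\le\tfrac14 .$$ Let $N\ge1$ and $m\ge0$ be integers with $2\pi m\ge|\theta(i_0)|+2\pi$, and let $u^{N,m}$ be the interpolation defined below. Then there is a constant $C>0$ independent of $N$ and $m$ such that $$F_1(u^{N,m},\Sigma^\alpha(T_0))\le C\Big(N\,F_1(u,T_0)+\frac{m^2}{N}\Big).$$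
   Context: Lattice: $\hat e_1=(1,0)$, $\hat e_2=\tfrac12(1,\sqrt3)$, $\hat e_3=\tfrac12(-1,\sqrt3)$, $\mathcal{L}=\{z_1\hat e_1+z_2\hat e_2\colon z\in\mathbb{Z}^2\}$, $\mathcal{L}^1=\{z_1(\hat e_1+\hat e_2)+z_2(\hat e_2+\hat e_3)\colon z\in\mathbb{Z}^2\}$, $\mathcal{L}^2=\mathcal{L}^1+\hat e_1$, $\mathcal{L}^3=\mathcal{L}^1+\hat e_2$. $\mathcal{T}(\mathbb{R}^2)$: closed triangles $\mathrm{conv}\{i,j,k\}$, $i,j,k\in\mathcal L$ pairwise at distance 1, labelled $i\in\mathcal{L}^1,j\in\mathcal{L}^2,k\in\mathcal{L}^3$. Unit circle $\mathcal S^1$ identified with unit complex numbers. For $v:\mathcal L\to\mathcal S^1$ (possibly only defined on the vertices involved) and a set $A$, $F_1(v,T)=|v(i)+v(j)+v(k)|^2$ and $F_1(v,A)=\sum_{T\in\mathcal T(\mathbb{R}^2),\,T\subset A}F_1(v,T)$. For $w\in\mathbb{R}^2$, $w^\perp=(-w_2,w_1)$. Slice: $\Sigma^\alpha=\{s\hat e_\alpha+t\hat e_\alpha^\perp\colon s\in\mathbb{R},\ t\in[0,\tfrac{\sqrt3}{2}]\}$; for a triangle in $\Sigma^\alpha$ each vertex $p$ satisfies $\langle p,\hat e_\alpha^\perp\rangle\in\{0,\tfrac{\sqrt3}2\}$. Set $\tau(0)=1$, $\tau(\tfrac{\sqrt3}2)=-1$, and recursively for $h\in\mathbb{N}$ and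 $p\in\{i,j,k\}$: $p_{h+1}=p_h+\tfrac32\hat e_\alpha+\tau(\langle p_h,\hat e_\alpha^\perp\rangle)\tfrac{\sqrt3}{2}\hat e_\alpha^\perp$, $T_h=\mathrm{conv}\{i_h,j_h,k_h\}\subset\Sigma^\alpha$, and $\Sigma^\alpha(T_0)=\mathrm{conv}\{T_h\colon h\in\mathbb{N}\}$. Interpolated angles: for $h=0,\dots,N$, $\theta(i_h)=(1-\tfrac hN)\theta(i_0)+\tfrac hN2\pi m$, $\theta(j_h)=(1-\tfrac hN)\theta(j_0)+\tfrac hN2\pi m+\tfrac hN\tfrac{2\pi}3$, $\theta(k_h)=(1-\tfrac hN)\theta(k_0)+\tfrac hN2\pi m+\tfrac hN\tfrac{4\pi}3$; for $h\ge N+1$, $\theta(i_h)=2\pi m$, $\theta(j_h)=2\pi m+\tfrac{2\pi}3$, $\theta(k_h)=2\pi m+\tfrac{4\pi}3$. The interpolation $u^{N,m}\colon\mathcal{L}\cap\Sigma^\alpha(T_0)\to\mathcal{S}^1$ is $u^{N,m}(p_h)=e^{\iota\theta(p_h)}$ for $p\in\{i,j,k\}$, $h\in\mathbb N$. *)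

From HB Require Import structures.
From mathcomp Require Import all_boot all_order all_algebra.
From mathcomp Require Import all_classical all_reals all_analysis.
Set Implicit Arguments. Unset Strict Implicit. Unset Printing Implicit Defensive.
Import Order.TTheory GRing.Theory Num.Theory.
Local Open Scope classical_set_scope.
Local Open Scope ring_scope.

Section Defs.
Variable R : realType.

Definition pt := (R * R)%type.
Definition padd (p q : pt) : pt := (p.1 + q.1, p.2 + q.2).
Definition pscale (a : R) (p : pt) : pt := (a * p.1, a * p.2).
Definition inner (p q : pt) : R := p.1 * q.1 + p.2 * q.2.
Definition perp (w : pt) : pt := (- w.2, w.1).
Definition dist (p q : pt) : R := Num.sqrt ((p.1 - q.1) ^+ 2 + (p.2 - q.2) ^+ 2).

Definition sqrt3 : R := Num.sqrt 3.
Definition e1 : pt := (1, 0).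
Definition e2 : pt := (1 / 2, sqrt3 / 2).
Definition e3 : pt := (- (1 / 2), sqrt3 / 2).
Definition ehat (a : nat) : pt := if a == 1%N then e1 else if a == 2%N then e2 else e3.

Definition onL (p : pt) : Prop :=
  exists z1 z2 : int, p = padd (pscale z1%:~R e1) (pscale z2%:~R e2).
Definition onL1 (p : pt) : Prop :=
  exists z1 z2 : int, p = padd (pscale z1%:~R (padd e1 e2)) (pscale z2%:~R (padd e2 e3)).
Definition onL2 (p : pt) : Prop := exists q, onL1 q /\ p = padd q e1.
Definition onL3 (p : pt) : Prop := exists q, onL1 q /\ p = padd q e2.

Definition convex_set (C : set pt) : Prop :=
  forall x y t, C x -> C y -> 0 <= t <= 1 ->
    C (padd (pscale t x) (pscale (1 - t) y)).
Definition conv (S : set pt) : set pt :=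
  [set x | forall C, convex_set C -> S `<=` C -> C x].

(* labelled triangles of T(R^2): triples (i,j,k), i in L^1, j in L^2, k in L^3,
   pairwise at distance 1; the triangle itself is conv{i,j,k} *)
Definition tri := (pt * pt * pt)%type.
Definition tri_i (t : tri) : pt := t.1.1.
Definition tri_j (t : tri) : pt := t.1.2.
Definition tri_k (t : tri) : pt := t.2.
Definition is_tri (t : tri) : Prop :=
  [/\ onL1 (tri_i t), onL2 (tri_j t) & onL3 (tri_k t)] /\
  [/\ dist (tri_i t) (tri_j t) = 1, dist (tri_j t) (tri_k t) = 1 &
      dist (tri_i t) (tri_k t) = 1].
Definition tri_set (t : tri) : set pt := conv [set tri_i t; tri_j t; tri_k t].

(* unit complex numbers, represented as points of R^2 = C *)
Definition on_S1 (z : pt) : Prop := z.1 ^+ 2 + z.2 ^+ 2 = 1.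
Definition expi (th : R) : pt := (cos th, sin th).
Definition sqnorm (z : pt) : R := z.1 ^+ 2 + z.2 ^+ 2.

Definition F1tri (v : pt -> pt) (t : tri) : R :=
  sqnorm (padd (padd (v (tri_i t)) (v (tri_j t))) (v (tri_k t))).
(* F_1(v,A) = sum over triangles T in T(R^2) with T subset A (possibly infinite
   sum of nonnegative terms, taken in the extended reals) *)
Definition F1 (v : pt -> pt) (A : set pt) : \bar R :=
  \esum_(t in [set t | is_tri t /\ tri_set t `<=` A]) (F1tri v t)%:E.

Definition Sigma (a : nat) : set pt :=
  [set x | exists s t : R, 0 <= t <= sqrt3 / 2 /\
     x = padd (pscale s (ehat a)) (pscale t (perp (ehat a)))].

Definition tau (t : R) : R := if t == 0 then 1 else -1.
Definition pstep (a : nat) (p : pt) : pt :=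
  padd p (padd (pscale (3 / 2) (ehat a))
               (pscale (tau (inner p (perp (ehat a))) * (sqrt3 / 2)) (perp (ehat a)))).
Definition piter (a : nat) (h : nat) (p : pt) : pt := iter h (pstep a) p.

Definition T_h (a : nat) (i0 j0 k0 : pt) (h : nat) : set pt :=
  conv [set piter a h i0; piter a h j0; piter a h k0].
Definition SigmaT0 (a : nat) (i0 j0 k0 : pt) : set pt :=
  conv (\bigcup_(h in [set: nat]) T_h a i0 j0 k0 h).

(* interpolated angles: c = 0, 2pi/3, 4pi/3 for p = i, j, k *)
Definition theta_interp (N m : nat) (th0 c : R) (h : nat) : R :=
  if (h <= N)%N then
    (1 - h%:R / N%:R) * th0 + h%:R / N%:R * (2 * pi * m%:R) + h%:R / N%:R * c
  else 2 * pi * m%:R + c.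

Definition is_interp (a : nat) (i0 j0 k0 : pt) (thi thj thk : R) (N m : nat)
    (v : pt -> pt) : Prop :=
  forall h : nat,
    [/\ v (piter a h i0) = expi (theta_interp N m thi 0 h),
        v (piter a h j0) = expi (theta_interp N m thj (2 * pi / 3) h) &
        v (piter a h k0) = expi (theta_interp N m thk (4 * pi / 3) h)].

End Defs.

(* In coordinates along [ehat a] and across it, Sigma^alpha is the strip
   0 <= across <= sqrt3/2, and a unit equilateral triangle inside it has its
   three vertices on the two edges of the strip.  Hence the points of L^1
   (resp. L^2, L^3) in the half strip to the right of T_0 are exactly the
   iterates i_h (resp. j_h, k_h), and every triangle of T(R^2) inside
   Sigma^alpha(T_0) is conv{i_l1, j_l2, k_l3} with l1, l2, l3 in {H, H+1}.
   From level N on the interpolated phases are balanced and F_1 vanishes, so at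
   most 8N triangles contribute.  If F_1(u,T_0) > 0, bounding each of them by 9
   gives F_1 <= 72 N <= (72 / F_1(u,T_0)) N F_1(u,T_0).  If F_1(u,T_0) = 0, the
   pinching hypotheses force theta(j_0) = theta(i_0) + 2pi/3 and
   theta(k_0) = theta(i_0) + 4pi/3; the phases of a triangle then take only the
   two values theta_H, theta_(H+1) of one interpolation, up to these shifts, so
   its energy is at most |e^(i theta_(H+1)) - e^(i theta_H)|^2
   <= 2 ((2 pi m - theta(i_0)) / N)^2, and the sum is O(m^2 / N). *)

From Pilot Require Import Defs.
From HB Require Import structures.
From mathcomp Require Import all_boot all_order all_algebra.
From mathcomp Require Import all_classical all_reals all_analysis.
From mathcomp Require Import zify ring lra.
Set Implicit Arguments.
Unset Strict Implicit.
Unset Printing Implicit Defensive.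

Import Order.TTheory GRing.Theory Num.Theory.
Import numFieldNormedType.Exports.
Local Open Scope classical_set_scope.
Local Open Scope ring_scope.

Lemma sqrt3_sqr (R : realType) : sqrt3 R ^+ 2 = 3.
Proof. by rewrite /sqrt3 sqr_sqrtr // ler0n. Qed.

Lemma sqrt3_gt0 (R : realType) : 0 < sqrt3 R.
Proof. by rewrite /sqrt3 sqrtr_gt0 ltr0n. Qed.

Lemma sub_conv (R : realType) (S : set (pt R)) : S `<=` Defs.conv S.
Proof. by move=> x Sx C _; apply. Qed.

Lemma conv_sub (R : realType) (S C : set (pt R)) :
  Defs.convex_set C -> S `<=` C -> Defs.conv S `<=` C.
Proof. by move=> cC SC x; apply. Qed.

Section StripCoordinates.
Variables (R : realType) (a : nat).
Hypothesis ha : (1 <= a <= 3)%N.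
Implicit Types (p q x : pt R).

Local Notation e := (ehat R a).
Local Notation w := (sqrt3 R / 2).

Lemma strip_width_gt0 : 0 < w.
Proof. by rewrite divr_gt0 ?sqrt3_gt0. Qed.

Definition along x := inner x e.
Definition across x := inner x (perp e).

Lemma ehat_norm1 : e.1 ^+ 2 + e.2 ^+ 2 = 1.
Proof.
have := sqrt3_sqr R; move: ha; rewrite /ehat /e1 /e2 /e3.
by case: a => [|[|[|[|n]]]] //= _; nra.
Qed.

Lemma coords_inj p q : along p = along q -> across p = across q -> p = q.
Proof.
have pE r : r = (e.1 * along r - e.2 * across r, e.2 * along r + e.1 * across r).
  rewrite [LHS]surjective_pairing -[r.1]mulr1 -[r.2]mulr1 -ehat_norm1.
  by rewrite /along /across /inner /perp /=; congr pair; ring.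
by move=> hs ht; rewrite (pE p) (pE q) hs ht.
Qed.

Lemma along_padd p q : along (padd p q) = along p + along q.
Proof. rewrite /along /inner /=; ring. Qed.

Lemma across_padd p q : across (padd p q) = across p + across q.
Proof. rewrite /across /inner /=; ring. Qed.

Lemma along_pscale c p : along (pscale c p) = c * along p.
Proof. rewrite /along /inner /=; ring. Qed.

Lemma across_pscale c p : across (pscale c p) = c * across p.
Proof. rewrite /across /inner /=; ring. Qed.

Lemma along_ehat : along e = 1.
Proof. by rewrite /along /inner -ehat_norm1 !expr2. Qed.

Lemma across_ehat : across e = 0.
Proof. rewrite /across /inner /=; ring. Qed.

Lemma along_perp : along (perp e) = 0.
Proof. rewrite /along /inner /=; ring. Qed.

Lemma across_perp : across (perp e) = 1.
Proof. by rewrite /across /inner /= -ehat_norm1 !expr2; ring. Qed.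

Lemma along_pstep p : along (pstep a p) = along p + 3 / 2.
Proof.
by rewrite /pstep !along_padd !along_pscale along_ehat along_perp; ring.
Qed.

Lemma across_pstep p : across (pstep a p) = across p + tau (across p) * w.
Proof.
by rewrite /pstep !across_padd !across_pscale across_ehat across_perp; ring.
Qed.

Lemma across_Sigma x : Sigma a x -> 0 <= across x <= w.
Proof.
case=> s [t [ht ->]].
by rewrite across_padd !across_pscale across_ehat across_perp mulr0 mulr1 add0r.
Qed.

Lemma dist1_coords p q : dist p q = 1 ->
  (along p - along q) ^+ 2 + (across p - across q) ^+ 2 = 1.
Proof.
rewrite /dist => d1.
have -> : (along p - along q) ^+ 2 + (across p - across q) ^+ 2 =
    ((p.1 - q.1) ^+ 2 + (p.2 - q.2) ^+ 2) * (e.1 ^+ 2 + e.2 ^+ 2).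
  by rewrite /along /across /inner /perp /=; ring.
have d_ge0 : 0 <= (p.1 - q.1) ^+ 2 + (p.2 - q.2) ^+ 2 by rewrite addr_ge0 ?sqr_ge0.
by rewrite ehat_norm1 mulr1 -(sqr_sqrtr d_ge0) d1 expr1n.
Qed.

Lemma dist1_along p q : dist p q = 1 -> -1 <= along p - along q <= 1.
Proof.
move=> /dist1_coords d1; have := sqr_ge0 (across p - across q).
by move=> h; apply/andP; split; nra.
Qed.

Definition on_strip_edge x := across x = 0 \/ across x = w.

Lemma coords_piter p h : on_strip_edge p ->
  along (piter a h p) = along p + 3 / 2 * h%:R /\
  across (piter a h p) = if odd h then w - across p else across p.
Proof.
move=> hp; have w_gt0 := strip_width_gt0.
elim: h => [|h [IHs IHt]]; first by rewrite /= mulr0 addr0.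
rewrite /piter iterS -/(piter a h p) along_pstep across_pstep IHs IHt -addn1 natrD.
split; first by ring.
rewrite /tau /=; case: (odd h) => /=; case: hp => ->.
- by rewrite subr0 gt_eqF //; ring.
- by rewrite subrr eqxx; ring.
- by rewrite eqxx; ring.
- by rewrite gt_eqF //; ring.
Qed.

Lemma width_sqr_edges (u v : R) : 0 <= u <= w -> 0 <= v <= w ->
  (u - v) ^+ 2 = w ^+ 2 -> (u = 0 \/ u = w) /\ (v = 0 \/ v = w).
Proof.
move=> /andP[u0 uw] /andP[v0 vw] d.
have /eqP : (u - v - w) * (u - v + w) = 0 by rewrite -subr_sqr d subrr.
by rewrite mulf_eq0 => /orP[] /eqP ?; split; [right|left|left|right]; lra.
Qed.

Lemma unit_triangle_heights (si sj sk ti tj tk : R) :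
  (si - sj) ^+ 2 + (ti - tj) ^+ 2 = 1 ->
  (sj - sk) ^+ 2 + (tj - tk) ^+ 2 = 1 ->
  (si - sk) ^+ 2 + (ti - tk) ^+ 2 = 1 ->
  (tj - ti) ^+ 2 + (tj - ti) * (tk - tj) + (tk - tj) ^+ 2 = 3 / 4.
Proof.
set A := sj - si; set B := sk - sj; set x := tj - ti; set y := tk - tj => dij djk dik.
have eA : A ^+ 2 = 1 - x ^+ 2 by rewrite /A /x; nra.
have eB : B ^+ 2 = 1 - y ^+ 2 by rewrite /B /y; nra.
have eAB : A * B = - 1 / 2 - x * y by rewrite /A /B /x /y; nra.
have : (A * B) ^+ 2 = A ^+ 2 * B ^+ 2 by rewrite exprMn.
by rewrite eAB eA eB => h; nra.
Qed.

Lemma height_cases (x y : R) : x ^+ 2 + x * y + y ^+ 2 = 3 / 4 ->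
  x ^+ 2 <= 3 / 4 -> y ^+ 2 <= 3 / 4 -> (x + y) ^+ 2 <= 3 / 4 ->
  [\/ x = 0 /\ y ^+ 2 = 3 / 4, y = 0 /\ x ^+ 2 = 3 / 4 | x + y = 0 /\ x ^+ 2 = 3 / 4].
Proof.
move=> h hx hy hxy; have [xy_ge0|xy_lt0] := lerP 0 (x * y).
  have /eqP : x * y = 0 by apply: le_anti; rewrite xy_ge0 andbT; nra.
  by rewrite mulf_eq0 => /orP[] /eqP xy0; [apply: Or31 | apply: Or32];
    split => //; rewrite -h xy0; ring.
have xs_ge0 : 0 <= x * (x + y) by rewrite mulrDr -expr2; lra.
have ys_ge0 : 0 <= y * (x + y) by rewrite mulrDr -expr2; lra.
have : 0 <= x * y * (x + y) ^+ 2 by rewrite expr2 mulrACA mulr_ge0.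
move=> h3; have : (x + y) ^+ 2 <= 0 by nra.
rewrite -[_ <= 0]negbK -ltNge lt0r sqr_ge0 sqrf_eq0 andbT negbK => /eqP s0.
by apply: Or33; split => //; rewrite -h (_ : y = - x); [ring | lra].
Qed.

Lemma unit_triangle_strip_edges p q r :
  0 <= across p <= w -> 0 <= across q <= w -> 0 <= across r <= w ->
  dist p q = 1 -> dist q r = 1 -> dist p r = 1 ->
  [/\ on_strip_edge p, on_strip_edge q & on_strip_edge r].
Proof.
move=> hp hq hr dpq dqr dpr.
have w2 : w ^+ 2 = 3 / 4 by rewrite expr_div_n sqrt3_sqr; field.
have := unit_triangle_heights (dist1_coords dpq) (dist1_coords dqr)
  (dist1_coords dpr).
have hx : (across q - across p) ^+ 2 <= 3 / 4 by rewrite -w2; nra.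
have hy : (across r - across q) ^+ 2 <= 3 / 4 by rewrite -w2; nra.
have hxy : (across q - across p + (across r - across q)) ^+ 2 <= 3 / 4.
  by rewrite -w2; nra.
rewrite /on_strip_edge; case/height_cases => // -[x0 d]; rewrite -w2 in d.
- have [? ?] := width_sqr_edges hr hq d.
  by rewrite (_ : across p = across q) //; lra.
- have [? ?] := width_sqr_edges hq hp d.
  by rewrite (_ : across r = across q) //; lra.
- have [? ?] := width_sqr_edges hq hp d.
  by rewrite (_ : across r = across p) //; lra.
Qed.

Lemma coords_onL1 x : onL1 x -> exists m k : int,
  along x = 3 / 2 * m%:~R /\ across x = w * (m%:~R + 2 * k%:~R).
Proof.
case=> z1 [z2 ->].
have s3 (z : int) : (z%:~R : R) * (sqrt3 R ^+ 2 - 3) = 0.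
  by rewrite sqrt3_sqr subrr mulr0.
have := s3 z1; have := s3 z2.
move: ha; rewrite /along /across /inner /perp /padd /pscale /ehat /e1 /e2 /e3 /=.
case: a => [|[|[|[|n]]]] //= _ s2 s1.
- by exists z1, z2; split; field.
- by exists (z1 + z2), (- z1); rewrite !rmorphD !rmorphN /=; split; [lra | field].
- by exists z2, (- z1 - z2); rewrite !rmorphD !rmorphN /=; split; [lra | field].
Qed.

(* [x - y] lies in L^1, read in strip coordinates. *)
Definition lattice_congr x y := exists M K : int,
  along x - along y = 3 / 2 * M%:~R /\ across x - across y = w * (M%:~R + 2 * K%:~R).

Lemma onL1_congr x y : onL1 x -> onL1 y -> lattice_congr x y.
Proof.
move=> /coords_onL1 [m [k [sx tx]]] /coords_onL1 [m' [k' [sy ty]]].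
by exists (m - m'), (k - k'); rewrite !intrB sx tx sy ty; split; ring.
Qed.

Lemma lattice_congr_padd x y s : lattice_congr x y -> lattice_congr (padd x s) (padd y s).
Proof.
case=> M [K [hs ht]]; exists M, K.
by rewrite !along_padd !across_padd -hs -ht; split; ring.
Qed.

Lemma onL2_congr x y : onL2 x -> onL2 y -> lattice_congr x y.
Proof.
by case=> [x' [Lx ->]] [y' [Ly ->]]; apply/lattice_congr_padd/onL1_congr.
Qed.

Lemma onL3_congr x y : onL3 x -> onL3 y -> lattice_congr x y.
Proof.
by case=> [x' [Lx ->]] [y' [Ly ->]]; apply/lattice_congr_padd/onL1_congr.
Qed.

Lemma piter_of_lattice_congr p x : on_strip_edge p -> 0 <= across x <= w ->
  along p - 3 / 2 < along x -> lattice_congr x p -> exists h, x = piter a h p.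
Proof.
move=> hp /andP[x0 xw] xp [M [K [hs ht]]].
have w_gt0 := strip_width_gt0.
have [h hM] : exists h : nat, M = h.
  have : ((-1 : int)%:~R : R) < M%:~R by rewrite rmorphN1; lra.
  by rewrite ltr_int; case: M {hs ht} => // h _; exists h.
subst M; have {}ht : across x - across p = w * (h%:Z + 2 * K)%:~R.
  by rewrite intrD intrM.
have b1 : (-1 <= h%:Z + 2 * K)%R.
  by rewrite -(ler_int R) rmorphN1; case: hp => hp; rewrite hp in ht; nra.
have b2 : (h%:Z + 2 * K <= 1)%R.
  by rewrite -(ler_int R); case: hp => hp; rewrite hp in ht; nra.
have [hps hpt] := coords_piter h hp.
exists h; apply: coords_inj; first by rewrite hps -hs; ring.
have : (h%:Z + 2 * K = 0 /\ ~~ odd h) \/ (h%:Z + 2 * K = 1 /\ odd h) \/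
       (h%:Z + 2 * K = -1 /\ odd h) by lia.
case=> [[e o]|[[e o]|[e o]]]; rewrite e in ht; rewrite hpt.
- by rewrite (negbTE o); lra.
- by rewrite o; case: hp => hp; rewrite hp in ht *; lra.
- by rewrite o; case: hp => hp; rewrite hp in ht *; rewrite rmorphN1 in ht; lra.
Qed.

Lemma tri_Sigma_edges (t : tri R) : is_tri t -> tri_set t `<=` Sigma a ->
  [/\ on_strip_edge (tri_i t), on_strip_edge (tri_j t) & on_strip_edge (tri_k t)].
Proof.
move=> [_ [dij djk dik]] tS.
have inS y : [set tri_i t; tri_j t; tri_k t] y -> 0 <= across y <= w.
  by move=> ty; apply: across_Sigma; apply: tS; apply: sub_conv.
by apply: unit_triangle_strip_edges => //; apply: inS; [left; left|left; right|right].
Qed.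

Definition half_strip s := [set x | 0 <= across x <= w /\ s <= along x].

Lemma half_strip_convex s : Defs.convex_set (half_strip s).
Proof.
move=> x y t [/andP[x0 xw] xs] [/andP[y0 yw] ys] /andP[t0 t1].
rewrite /half_strip /= along_padd across_padd !along_pscale !across_pscale.
by split; [apply/andP; split|]; nra.
Qed.

Lemma piter_half_strip s p h : on_strip_edge p -> s <= along p ->
  half_strip s (piter a h p).
Proof.
move=> hp sp; rewrite /half_strip /=; have [-> ->] := coords_piter h hp.
have w_gt0 := strip_width_gt0.
have : 0 <= 3 / 2 * h%:R :> R by rewrite mulr_ge0.
by case: (odd h); case: hp => ->; split; try apply/andP; lra.
Qed.

Lemma SigmaT0_sub_half_strip (i0 j0 k0 : pt R) s :
  on_strip_edge i0 -> on_strip_edge j0 -> on_strip_edge k0 ->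
  s <= along i0 -> s <= along j0 -> s <= along k0 ->
  SigmaT0 a i0 j0 k0 `<=` half_strip s.
Proof.
move=> ei ej ek si sj sk; apply: conv_sub; first exact: half_strip_convex.
move=> x [h _]; apply: conv_sub; first exact: half_strip_convex.
by move=> y [[->|->]|->]; apply: piter_half_strip.
Qed.

Lemma piter_levels_adjacent p q hp hq : on_strip_edge p -> on_strip_edge q ->
  -1 <= along p - along q <= 1 -> dist (piter a hp p) (piter a hq q) = 1 ->
  (hp <= hq.+1)%N /\ (hq <= hp.+1)%N.
Proof.
move=> ep eq /andP[d1 d2] /dist1_along.
have [-> _] := coords_piter hp ep; have [-> _] := coords_piter hq eq.
have lvl m n : (m%:R : R) < n%:R + 2 -> (m <= n.+1)%N.
  by move=> ?; rewrite -ltnS -(ltr_nat R) -addn2 natrD; lra.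
by move=> /andP[d3 d4]; split; apply: lvl; lra.
Qed.

Definition near_level (H l : nat) := l = H \/ l = H.+1.

Lemma near_level_min (l1 l2 l3 : nat) :
  (l1 <= l2.+1)%N -> (l2 <= l1.+1)%N -> (l2 <= l3.+1)%N -> (l3 <= l2.+1)%N ->
  (l1 <= l3.+1)%N -> (l3 <= l1.+1)%N ->
  let H := minn l1 (minn l2 l3) in
  [/\ near_level H l1, near_level H l2 & near_level H l3].
Proof. by move=> *; rewrite /near_level /=; split; lia. Qed.

Lemma tri_sub_SigmaT0_levels (i0 j0 k0 : pt R) (t : tri R) :
  is_tri (i0, j0, k0) -> tri_set (i0, j0, k0) `<=` Sigma a ->
  is_tri t -> tri_set t `<=` SigmaT0 a i0 j0 k0 ->
  exists H l1 l2 l3, [/\ near_level H l1, near_level H l2, near_level H l3 &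
    t = (piter a l1 i0, piter a l2 j0, piter a l3 k0)].
Proof.
move=> T0 /(tri_Sigma_edges T0) [ei ej ek].
case: T0 => [[Li Lj Lk] [dij djk dik]].
case: t => [[ti tj] tk] [[Lti Ltj Ltk] [tdij tdjk tdik]] tS.
rewrite /tri_i /tri_j /tri_k /= in ei ej ek Li Lj Lk dij djk dik.
rewrite /tri_i /tri_j /tri_k /= in Lti Ltj Ltk tdij tdjk tdik.
have /andP[aij aij'] := dist1_along dij.
have /andP[ajk ajk'] := dist1_along djk.
have /andP[aik aik'] := dist1_along dik.
pose s := Num.min (along i0) (Num.min (along j0) (along k0)).
have [si sj sk] : [/\ s <= along i0, s <= along j0 & s <= along k0].
  by rewrite !ge_min !lexx !orbT.
have sub := SigmaT0_sub_half_strip ei ej ek si sj sk.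
have vertex p0 x : on_strip_edge p0 -> along p0 - 1 <= s ->
    [set ti; tj; tk] x -> lattice_congr x p0 -> exists h, x = piter a h p0.
  move=> e0 p0s /sub_conv /tS /sub [xw xs].
  by apply: piter_of_lattice_congr => //; lra.
have [s1 s2 s3] : [/\ along i0 - 1 <= s, along j0 - 1 <= s & along k0 - 1 <= s].
  by rewrite !le_min; split; apply/and3P; split; lra.
have [hi Ei] := vertex _ _ ei s1 (or_introl (or_introl erefl)) (onL1_congr Lti Li).
have [hj Ej] := vertex _ _ ej s2 (or_introl (or_intror erefl)) (onL2_congr Ltj Lj).
have [hk Ek] := vertex _ _ ek s3 (or_intror erefl) (onL3_congr Ltk Lk).
subst ti tj tk.
have [ij ji] := piter_levels_adjacent ei ej (dist1_along dij) tdij.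
have [jk kj] := piter_levels_adjacent ej ek (dist1_along djk) tdjk.
have [ik ki] := piter_levels_adjacent ei ek (dist1_along dik) tdik.
have [? ? ?] := near_level_min ij ji jk kj ik ki.
by exists (minn hi (minn hj hk)), hi, hj, hk.
Qed.

End StripCoordinates.

Section Phases.
Variable R : realType.
Implicit Types x y z A B X Y : R.

Lemma cos_pi3 : cos (pi / 3) = 1 / 2 :> R.
Proof.
have pi2 := @pi_ge2 R.
have : 0 < cos (pi / 3) :> R by apply: cos_gt0_pihalf; apply/andP; split; lra.
have : cos pi = cos (pi / 3 + pi / 3 + pi / 3) :> R by congr cos; field.
rewrite cospi !cosD !sinD; have := sin2cos2 (pi / 3 : R).
set c := cos (pi / 3); set s := sin (pi / 3) => s2 e c_gt0.
have /eqP : (2 * c - 1) ^+ 2 * (c + 1) = 0.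
  have : (s ^+ 2 - (1 - c ^+ 2)) * c = 0 by rewrite s2 subrr mul0r.
  by lra.
by rewrite mulf_eq0 sqrf_eq0 => /orP[] /eqP; lra.
Qed.

Lemma cos_2pi3 : cos (2 * pi / 3) = - 1 / 2 :> R.
Proof.
rewrite (_ : 2 * pi / 3 = pi / 3 + pi / 3); last by field.
by rewrite cosD -!expr2 sin2cos2 cos_pi3; field.
Qed.

Lemma sin_2pi3_sqr : sin (2 * pi / 3) ^+ 2 = 3 / 4 :> R.
Proof. by rewrite sin2cos2 cos_2pi3; field. Qed.

Lemma cos_4pi3 : cos (4 * pi / 3) = - 1 / 2 :> R.
Proof.
rewrite (_ : 4 * pi / 3 = - (2 * pi / 3) + pi *+ 2); last by rewrite mulr2n; field.
by rewrite cosD2pi cosN cos_2pi3.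
Qed.

Lemma sin_4pi3 : sin (4 * pi / 3) = - sin (2 * pi / 3) :> R.
Proof.
rewrite (_ : 4 * pi / 3 = - (2 * pi / 3) + pi *+ 2); last by rewrite mulr2n; field.
by rewrite sinD2pi sinN.
Qed.

Lemma sqnorm_ge0 (p : pt R) : 0 <= sqnorm p.
Proof. by rewrite /sqnorm addr_ge0 ?sqr_ge0. Qed.

Definition expi3 x y z : pt R := padd (padd (expi x) (expi y)) (expi z).

Lemma sqnorm_expi3_le9 x y z : sqnorm (expi3 x y z) <= 9.
Proof.
rewrite /sqnorm /expi3 /expi /padd /=.
have := cos2Dsin2 x; have := cos2Dsin2 y; have := cos2Dsin2 z.
have := sqr_ge0 (cos x - cos y); have := sqr_ge0 (cos y - cos z).
have := sqr_ge0 (cos x - cos z); have := sqr_ge0 (sin x - sin y).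
have := sqr_ge0 (sin y - sin z); have := sqr_ge0 (sin x - sin z).
nra.
Qed.

Lemma sqnorm_expi3_balanced X :
  sqnorm (expi3 X (X + 2 * pi / 3) (X + 4 * pi / 3)) = 0.
Proof.
rewrite /sqnorm /expi3 /expi /padd /= !cosD !sinD cos_2pi3 cos_4pi3 sin_4pi3.
set s := sin (2 * pi / 3).
rewrite (_ : _ + _ + _ = 0); last by field.
by rewrite (_ : _ + _ + _ = 0) ?expr0n ?addr0 //; field.
Qed.

Lemma sqnorm_expi3_two_phases A B (b1 b2 b3 : bool) :
  sqnorm (expi3 (if b1 then B else A) ((if b2 then B else A) + 2 * pi / 3)
                ((if b3 then B else A) + 4 * pi / 3))
  <= (cos B - cos A) ^+ 2 + (sin B - sin A) ^+ 2.
Proof.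
have := sin_2pi3_sqr; set s := sin (2 * pi / 3) => s2.
have : (s ^+ 2 - 3 / 4) * ((cos B - cos A) ^+ 2 + (sin B - sin A) ^+ 2) = 0.
  by rewrite s2 subrr mul0r.
rewrite /sqnorm /expi3 /expi /padd /= !cosD !sinD cos_2pi3 cos_4pi3 sin_4pi3 -/s.
have := sqr_ge0 (cos B - cos A); have := sqr_ge0 (sin B - sin A).
by case: b1; case: b2; case: b3 => /=; lra.
Qed.

Lemma cos_sub_of_sqnorm_expi3_eq0 x y z : sqnorm (expi3 x y z) = 0 ->
  cos (y - x) = - 1 / 2 /\ cos (z - y) = - 1 / 2.
Proof.
rewrite /sqnorm /expi3 /expi /padd /= => /eqP.
rewrite paddr_eq0 ?sqr_ge0 // !sqrf_eq0 => /andP[/eqP hc /eqP hs].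
have := cos2Dsin2 x; have := cos2Dsin2 y; have := cos2Dsin2 z.
have cz : cos z = - (cos x + cos y) by lra.
have sz : sin z = - (sin x + sin y) by lra.
by rewrite !cosB cz sz; split; nra.
Qed.

Lemma eq_2pi3_of_cos x : `|x - 2 * pi / 3| <= 1 / 4 -> cos x = - 1 / 2 ->
  x = 2 * pi / 3.
Proof.
rewrite ler_norml => /andP[x1 x2] cx; have pi2 := @pi_ge2 R.
by apply: cos_inj; rewrite ?cx ?cos_2pi3 // in_itv /=; apply/andP; split; lra.
Qed.

Lemma ler_dist_derive_le1 (f df : R -> R) :
  (forall x : R, is_derive x (1 : R) f (df x)) -> continuous f -> (forall x, `|df x| <= 1) ->
  forall x y, `|f y - f x| <= `|y - x|.
Proof.
move=> fd fc df1 x y; wlog xy : x y / x <= y.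
  move=> W; case/orP: (le_total x y) => [/W //|/W].
  by rewrite (distrC (f y)) (distrC y).
have [c _ ->] := MVT_segment xy (fun z _ => fd z) (continuous_subspaceT fc).
by rewrite normrM ler_piMl.
Qed.

Lemma sqr_dist_expi X Y :
  (cos Y - cos X) ^+ 2 + (sin Y - sin X) ^+ 2 <= 2 * (Y - X) ^+ 2.
Proof.
have dc : `|cos Y - cos X| <= `|Y - X|.
  apply: (@ler_dist_derive_le1 cos (fun z => - sin z)) => [|z].
  - exact: continuous_cos.
  - by rewrite normrN sin_max.
have ds : `|sin Y - sin X| <= `|Y - X|.
  apply: (@ler_dist_derive_le1 sin cos) => [|z].
  - exact: continuous_sin.
  - exact: cos_max.
have := real_normK (num_real (cos Y - cos X)).
have := real_normK (num_real (sin Y - sin X)).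
have := real_normK (num_real (Y - X)).
have := normr_ge0 (cos Y - cos X); have := normr_ge0 (sin Y - sin X).
nra.
Qed.

End Phases.

Section Interpolation.
Variables (R : realType) (N m : nat).
Hypothesis N_gt0 : (0 < N)%N.

Lemma theta_interp_ge (th0 c : R) h : (N <= h)%N ->
  theta_interp N m th0 c h = 2 * pi * m%:R + c.
Proof.
rewrite /theta_interp => Nh; case: leqP => // hN.
have -> : h = N by apply/eqP; rewrite eqn_leq hN Nh.
by rewrite divff ?pnatr_eq0 -?lt0n //; ring.
Qed.

Lemma theta_interp_shift (th0 c : R) h :
  theta_interp N m (th0 + c) c h = theta_interp N m th0 0 h + c.
Proof. by rewrite /theta_interp; case: ifP => _; ring. Qed.

Lemma theta_interp_step (th0 : R) h : (h < N)%N ->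
  theta_interp N m th0 0 h.+1 - theta_interp N m th0 0 h = (2 * pi * m%:R - th0) / N%:R.
Proof.
move=> hN; rewrite /theta_interp hN (ltnW hN) -addn1 natrD.
by field; rewrite pnatr_eq0 -lt0n.
Qed.

Definition interp_energy (thi thj thk : R) (l1 l2 l3 : nat) :=
  sqnorm (expi3 (theta_interp N m thi 0 l1) (theta_interp N m thj (2 * pi / 3) l2)
                (theta_interp N m thk (4 * pi / 3) l3)).

Lemma interp_energy_eq0 thi thj thk H l1 l2 l3 : (N <= H)%N ->
  near_level H l1 -> near_level H l2 -> near_level H l3 ->
  interp_energy thi thj thk l1 l2 l3 = 0.
Proof.
move=> NH h1 h2 h3; have Nl l : near_level H l -> (N <= l)%N by case=> ->; lia.
by rewrite /interp_energy !theta_interp_ge ?Nl // addr0 sqnorm_expi3_balanced.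
Qed.

Lemma interp_energy_balanced_le thi H l1 l2 l3 : (H < N)%N ->
  near_level H l1 -> near_level H l2 -> near_level H l3 ->
  interp_energy thi (thi + 2 * pi / 3) (thi + 4 * pi / 3) l1 l2 l3 <=
    2 * ((2 * pi * m%:R - thi) / N%:R) ^+ 2.
Proof.
move=> HN h1 h2 h3; rewrite /interp_energy !theta_interp_shift.
set th := theta_interp N m thi 0.
have two l : near_level H l -> exists b : bool, th l = if b then th H.+1 else th H.
  by case=> ->; [exists false | exists true].
have [[b1 ->] [b2 ->] [b3 ->]] := And3 (two _ h1) (two _ h2) (two _ h3).
apply: le_trans (sqnorm_expi3_two_phases _ _ b1 b2 b3) _.
by rewrite -(theta_interp_step thi HN) sqr_dist_expi.
Qed.

End Interpolation.

Lemma esum_le_cover (R : realType) (T : choiceType) (S : set T) (f : T -> R)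
    (E : nat -> T) (M : nat) (B : R) :
  (forall t, 0 <= f t) -> 0 <= B -> S `<=` range E ->
  (forall n, f (E n) <= if (n < M)%N then B else 0) ->
  (\esum_(t in S) (f t)%:E <= (M%:R * B)%:E)%E.
Proof.
move=> f_ge0 B_ge0 SE fE.
have [code codeK] : {code : T -> nat & forall t, S t -> E (code t) = t}.
  apply: (@choice T nat (fun t n => S t -> E n = t)) => t.
  by case: (pselect (S t)) => [/SE [n _ <-]|nSt]; [exists n | exists 0%N].
rewrite (eq_esum (b := fun t => (f (E (code t)))%:E)); last by move=> t /codeK ->.
rewrite -(esum_image S code (fun n => (f (E n))%:E)); last first.
  by move=> x y /set_mem Sx /set_mem Sy exy; rewrite -(codeK x Sx) -(codeK y Sy) exy.
apply: (@le_trans _ _ (\esum_(n in [set: nat]) (if (n < M)%N then B else 0)%:E)%E).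
  rewrite esum_mkcond; apply: le_esum => n _.
  by case: ifP => _; rewrite lee_fin //; case: ifP.
have IM n : (n \in `I_M) = (n < M)%N by apply/idP/idP => [/set_mem|/mem_set].
rewrite (_ : (\esum_(n in _) _)%E = \esum_(n in `I_M) B%:E)%E; last first.
  by rewrite [RHS]esum_mkcond; apply: eq_esum => n _; rewrite IM; case: ifP.
by rewrite esum_fset ?finite_II // -fsbig_ord sumEFin sumr_const card_ord mulr_natl.
Qed.

Lemma level_code H l1 l2 l3 : near_level H l1 -> near_level H l2 -> near_level H l3 ->
  exists n, [/\ n %/ 8 = H, n %/ 8 + n %% 2 = l1, n %/ 8 + n %/ 2 %% 2 = l2
    & n %/ 8 + n %/ 4 %% 2 = l3]%N.
Proof.
rewrite /near_level => h1 h2 h3.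
by exists (8 * H + (l1 - H) + 2 * (l2 - H) + 4 * (l3 - H))%N; split; lia.
Qed.

Lemma F1_SigmaT0_le (R : realType) a (i0 j0 k0 : pt R) thi thj thk N m v B :
  (1 <= a <= 3)%N -> is_tri (i0, j0, k0) -> tri_set (i0, j0, k0) `<=` Sigma a ->
  (0 < N)%N -> is_interp a i0 j0 k0 thi thj thk N m v -> 0 <= B ->
  (forall H l1 l2 l3, (H < N)%N ->
     near_level H l1 -> near_level H l2 -> near_level H l3 ->
     interp_energy N m thi thj thk l1 l2 l3 <= B) ->
  (F1 v (SigmaT0 a i0 j0 k0) <= ((8 * N)%:R * B)%:E)%E.
Proof.
move=> ha T0 T0S N_gt0 hv B_ge0 hB.
(* [n] codes the level [n %/ 8] and the three offsets as bits, so that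
   [n < 8 * N] exactly when the level is below [N]. *)
pose lv n k := (n %/ 8 + n %/ k %% 2)%N.
pose E n := (piter a (lv n 1%N) i0, piter a (lv n 2%N) j0, piter a (lv n 4%N) k0).
apply: (@esum_le_cover _ _ _ _ E) => [t|//|t [Tt tS]|n].
- exact: sqnorm_ge0.
- have [H [l1 [l2 [l3 [h1 h2 h3 ->]]]]] := tri_sub_SigmaT0_levels ha T0 T0S Tt tS.
  have [n [_ e1 e2 e3]] := level_code h1 h2 h3.
  by exists n => //; rewrite /E /lv divn1 e1 e2 e3.
- have [vi _ _] := hv (lv n 1%N); have [_ vj _] := hv (lv n 2%N).
  have [_ _ vk] := hv (lv n 4%N).
  rewrite /F1tri /E /tri_i /tri_j /tri_k /= vi vj vk -/(interp_energy _ _ _ _ _ _ _ _).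
  have near k : near_level (n %/ 8) (lv n k) by rewrite /near_level /lv; lia.
  case: ltnP => nN; first by apply: (hB (n %/ 8)%N) => //; lia.
  have NH : (N <= n %/ 8)%N by lia.
  by rewrite (@interp_energy_eq0 _ _ m N_gt0 _ _ _ _ _ _ _ NH (near _) (near _) (near _)).
Qed.

Lemma F1_tri_ge (R : realType) (u : pt R -> pt R) (t : tri R) :
  is_tri t -> ((F1tri u t)%:E <= F1 u (tri_set t))%E.
Proof.
move=> Tt; apply: esum_ge; exists [set t]; last by rewrite fsbig_set1.
by split=> [|_ ->]; [exact: finite_set1 | split].
Qed.

Lemma balanced_of_sqnorm_expi3_eq0 (R : realType) (thi thj thk : R) :
  `|thj - thi - 2 * pi / 3| <= 1 / 4 -> `|thk - thj - 2 * pi / 3| <= 1 / 4 ->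
  sqnorm (expi3 thi thj thk) = 0 ->
  thj = thi + 2 * pi / 3 /\ thk = thi + 4 * pi / 3.
Proof.
move=> dj dk /cos_sub_of_sqnorm_expi3_eq0 [cj ck].
have := eq_2pi3_of_cos dj cj; have := eq_2pi3_of_cos dk ck.
by split; lra.
Qed.

Lemma F1_SigmaT0_balanced_le (R : realType) a (i0 j0 k0 : pt R) thi N m v :
  (1 <= a <= 3)%N -> is_tri (i0, j0, k0) -> tri_set (i0, j0, k0) `<=` Sigma a ->
  (0 < N)%N -> `|thi| + 2 * pi <= 2 * pi * m%:R ->
  is_interp a i0 j0 k0 thi (thi + 2 * pi / 3) (thi + 4 * pi / 3) N m v ->
  (F1 v (SigmaT0 a i0 j0 k0) <= (256 * pi ^+ 2 * (m%:R ^+ 2 / N%:R))%:E)%E.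
Proof.
move=> ha T0 T0S N_gt0 hm hv; set D := 2 * pi * m%:R - thi.
apply: le_trans (F1_SigmaT0_le (B := 2 * (D / N%:R) ^+ 2) ha T0 T0S N_gt0 hv _ _) _.
- by rewrite mulr_ge0 ?sqr_ge0.
- by move=> H l1 l2 l3; apply: interp_energy_balanced_le.
have pi_gt0 := @pi_gt0 R; have N_gt0' : 0 < N%:R :> R by rewrite ltr0n.
move: hm; rewrite -lerBrDr ler_norml => /andP[m1 m2].
have D_ge0 : 0 <= D by rewrite /D; nra.
have D_le : D <= 4 * pi * m%:R by rewrite /D; nra.
rewrite lee_fin (_ : (8 * N)%:R * _ = 16 * D ^+ 2 / N%:R); last first.
  by rewrite natrM; field; rewrite gt_eqF.
rewrite [X in _ <= X]mulrA ler_pM2r ?invr_gt0 //.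
have : D ^+ 2 <= (4 * pi * m%:R) ^+ 2 by nra.
by lra.
Qed.

Theorem lemma4p5 (R : realType) (a : nat) (i0 j0 k0 : pt R) (u : pt R -> pt R)
    (thi thj thk : R) :
  (1 <= a <= 3)%N ->
  is_tri (i0, j0, k0) ->
  tri_set (i0, j0, k0) `<=` Sigma a ->
  (forall p, onL p -> on_S1 (u p)) ->
  thi - pi <= thj < thi + pi ->
  thj - pi <= thk < thj + pi ->
  u i0 = expi thi -> u j0 = expi thj -> u k0 = expi thk ->
  `|thj - thi - 2 * pi / 3| <= 1 / 4 ->
  `|thk - thj - 2 * pi / 3| <= 1 / 4 ->
  exists C : R, 0 < C /\
    forall (N m : nat) (v : pt R -> pt R),
      (1 <= N)%N ->
      `|thi| + 2 * pi <= 2 * pi * m%:R ->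
      (forall p, onL p -> SigmaT0 a i0 j0 k0 p -> on_S1 (v p)) ->
      is_interp a i0 j0 k0 thi thj thk N m v ->
      (F1 v (SigmaT0 a i0 j0 k0) <=
         C%:E * ((N%:R)%:E * F1 u (tri_set (i0, j0, k0)) + (m%:R ^+ 2 / N%:R)%:E))%E.
Proof.
move=> ha T0 T0S _ _ _ ui uj uk dj dk.
set c0 := sqnorm (expi3 thi thj thk); set F1u := F1 u _.
have c0_le : (c0%:E <= F1u)%E by rewrite /c0 /expi3 -ui -uj -uk; apply: F1_tri_ge.
have F1u_ge0 : (0 <= F1u)%E by apply: le_trans c0_le; rewrite lee_fin sqnorm_ge0.
have [c0_gt0|c0_le0] := ltrP 0 c0.
  exists (72 / c0); split=> [|N m v N_gt0 _ _ hv]; first by rewrite divr_gt0.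
  apply: le_trans (F1_SigmaT0_le ha T0 T0S N_gt0 hv _ (fun H l1 l2 l3 _ _ _ _ =>
    sqnorm_expi3_le9 _ _ _)) _ => //.
  rewrite (_ : _ * 9 = 72 / c0 * (N%:R * c0)); last first.
    by rewrite natrM; field; rewrite gt_eqF.
  rewrite EFinM; apply: lee_wpmul2l; first by rewrite lee_fin divr_ge0 ?ltW.
  rewrite -[X in (X <= _)%E]adde0; apply: leeD.
    by rewrite EFinM; apply: lee_wpmul2l; rewrite ?lee_fin.
  by rewrite lee_fin divr_ge0 ?sqr_ge0.
have [Ej Ek] : thj = thi + 2 * pi / 3 /\ thk = thi + 4 * pi / 3.
  by apply: balanced_of_sqnorm_expi3_eq0 => //; apply: le_anti; rewrite c0_le0 sqnorm_ge0.
exists (256 * pi ^+ 2); split=> [|N m v N_gt0 hm _ hv].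
  by rewrite mulr_gt0 ?exprn_gt0 ?pi_gt0.
rewrite Ej Ek in hv; apply: le_trans (F1_SigmaT0_balanced_le ha T0 T0S N_gt0 hm hv) _.
rewrite EFinM; apply: lee_wpmul2l; first by rewrite lee_fin mulr_ge0 ?sqr_ge0.
by apply: leeDr; apply: mule_ge0; rewrite ?lee_fin.
Qed.
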